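(* Let $(F,\phi)$ be an extended representation graph for $E$, let $w\in F^0$, and let $p,q$ be paths of length $\ge1$ in $F$ with source $w$. If $r(p)=r(q)$, then $p=q$, or $cp=q$, or $p=cq$ for some closed path $c$ in $F$.
   Context: $E$ is a row-finite directed graph with, for each vertex $v$ emitting an edge, a chosen special edge $e^v\in s^{-1}(v)$; other edges are nonspecial. The double graph $E_d$ has vertices $E^0$ and edges $e$ (real) and $e^*$ (ghost) for $e\in E^1$, with $s_d(e)=s(e),r_d(e)=r(e),s_d(e^* )=r(e),r_d(e^* )=s(e)$. A closed path is a path of length $\ge1$ with equal source and range; juxtaposition denotes concatenation. An extended representation graph for $E$ is a pair $(F,\phi)$, $F$ a directed graph, $\phi:F\to E_d$ a graph homomorphism, such that for every $w\in F^0$: (i) $w$ is a source or receives exactly one edge $f_w$; (ii) if $w$ is a source or $\phi(f_w)$ is a nonspecial real edge, $\phi$ maps $s^{-1}(w)$ bijectively onto $s_d^{-1}(\phi(w))$; (iii) if $\phi(f_w)$ is a special real edge, onto $s_d^{-1}(\phi(w))\setminus\{\phi(f_w)^*\}$; (iv) if $\phi(f_w)$ is a ghost edge, onto the ghost edges in $s_d^{-1}(\phi(w))$. *)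

From Stdlib Require Import List.
Import ListNotations.
Set Implicit Arguments.

Record graph := Graph {
  vert : Type;
  edge : Type;
  src : edge -> vert;
  rng : edge -> vert }.
Arguments src {g} _.
Arguments rng {g} _.

Definition row_finite (E : graph) : Prop :=
  forall v : vert E, exists l : list (edge E),
    forall e : edge E, src e = v -> In e l.

(* A choice of special edges: sp v = Some (e^v) for each vertex v emitting
   an edge, with e^v in s^{-1}(v); sp v = None if v emits no edge. *)
Definition special_choice (E : graph) (sp : vert E -> option (edge E)) : Prop :=
  (forall v e, sp v = Some e -> src e = v) /\
  (forall v, sp v = None -> forall e : edge E, src e <> v).
Arguments special_choice {E} sp.

Definition is_special (E : graph) (sp : vert E -> option (edge E)) (e : edge E) : Prop :=
  sp (src e) = Some e.
Arguments is_special {E} sp e.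

(* Double graph E_d: edges inl e (real edge e) and inr e (ghost edge e^* ). *)
Definition double (E : graph) : graph :=
  @Graph (vert E) (edge E + edge E)
    (fun x => match x with inl e => src e | inr e => rng e end)
    (fun x => match x with inl e => rng e | inr e => src e end).

Definition is_ghost (E : graph) (x : edge (double E)) : Prop :=
  match x with inl _ => False | inr _ => True end.

Record hom (F G : graph) := Hom {
  hv : vert F -> vert G;
  he : edge F -> edge G;
  hom_src : forall f, src (he f) = hv (src f);
  hom_rng : forall f, rng (he f) = hv (rng f) }.

Definition bij_onto (F G : graph) (phi : hom F G) (w : vert F)
  (B : edge G -> Prop) : Prop :=
  (forall f, src f = w -> B (he phi f)) /\
  (forall f f', src f = w -> src f' = w -> he phi f = he phi f' -> f = f') /\
  (forall g, B g -> exists f, src f = w /\ he phi f = g).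

Definition is_source (F : graph) (w : vert F) : Prop :=
  forall f : edge F, rng f <> w.
Arguments is_source {F} w.

Definition ext_rep_graph (E : graph) (sp : vert E -> option (edge E))
  (F : graph) (phi : hom F (double E)) : Prop :=
  forall w : vert F,
    (is_source w \/ exists! f : edge F, rng f = w) /\
    (is_source w ->
       bij_onto phi w (fun g => src g = hv phi w)) /\
    (forall f e, rng f = w -> he phi f = inl e -> ~ is_special sp e ->
       bij_onto phi w (fun g => src g = hv phi w)) /\
    (forall f e, rng f = w -> he phi f = inl e -> is_special sp e ->
       bij_onto phi w (fun g => src g = hv phi w /\ g <> inr e)) /\
    (forall f e, rng f = w -> he phi f = inr e ->
       bij_onto phi w (fun g => src g = hv phi w /\ is_ghost g)).

Fixpoint chain (F : graph) (e : edge F) (l : list (edge F)) : Prop :=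
  match l with
  | [] => True
  | e' :: l' => rng e = src e' /\ chain F e' l'
  end.

Definition path_from_to (F : graph) (w v : vert F) (p : list (edge F)) : Prop :=
  match p with
  | [] => False
  | e :: l => src e = w /\ chain F e l /\ rng (last l e) = v
  end.
Arguments path_from_to {F} w v p.

Definition closed_path (F : graph) (c : list (edge F)) : Prop :=
  exists u, path_from_to u u c.
Arguments closed_path {F} c.

(* Condition (i) says that every vertex of F receives at most one edge, so a
   path is determined backwards by its range: two paths ending at the same
   vertex agree edge by edge from the end until one of them is exhausted, and
   hence one is a suffix of the other.  The remaining prefix leads from w back
   to the common source w of the suffix, so it is a closed path.  Neither
   row-finiteness nor the choice of special edges plays a role. *)
From Stdlib Require Import List.
Import ListNotations.

Lemma ext_rep_graph_rng_inj {E : graph} {sp : vert E -> option (edge E)}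
  {F : graph} {phi : hom F (double E)} :
  ext_rep_graph sp phi -> forall f f' : edge F, rng f = rng f' -> f = f'.
Proof.
  intros HF f f' Hff.
  destruct (HF (rng f)) as [[Hsource | [g [_ Hg]]] _].
  - exfalso; exact (Hsource f eq_refl).
  - rewrite <- (Hg f eq_refl). apply Hg. symmetry; exact Hff.
Qed.

Lemma last_cons (A : Type) (x y : A) (l : list A) : last (y :: l) x = last l y.
Proof.
  revert x y; induction l as [|z l IH]; intros x y; [reflexivity|].
  change (last (z :: l) x = last (z :: l) y). rewrite !IH. reflexivity.
Qed.

Section Paths.

Context {F : graph}.

Lemma chain_snoc (x e : edge F) (l : list (edge F)) :
  chain F x (l ++ [e]) <-> chain F x l /\ rng (last l x) = src e.
Proof.
  revert x; induction l as [|y l IH]; intro x.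
  - simpl; tauto.
  - change (rng x = src y /\ chain F y (l ++ [e]) <->
            (rng x = src y /\ chain F y l) /\ rng (last (y :: l) x) = src e).
    rewrite IH, last_cons. tauto.
Qed.

Lemma path_from_to_snoc (w v : vert F) (p : list (edge F)) (e : edge F) :
  path_from_to w v (p ++ [e]) <->
  rng e = v /\ (p = [] /\ src e = w \/ path_from_to w (src e) p).
Proof.
  destruct p as [|x l]; simpl.
  - intuition discriminate.
  - rewrite chain_snoc, last_last. intuition discriminate.
Qed.

Lemma path_from_to_src_uniq {w w' v v' : vert F} {p : list (edge F)} :
  path_from_to w v p -> path_from_to w' v' p -> w = w'.
Proof. destruct p; simpl; intuition congruence. Qed.

Lemma path_from_to_app_inv {w v : vert F} {c q : list (edge F)} :
  c <> [] -> q <> [] -> path_from_to w v (c ++ q) ->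
  exists u, path_from_to w u c /\ path_from_to u v q.
Proof.
  intro Hc; revert v.
  induction q as [|e q IH] using rev_ind; intros v Hq Hcq; [congruence|].
  rewrite app_assoc, path_from_to_snoc in Hcq.
  destruct Hcq as [He [[Hnil _] | Hcq]].
  - apply app_eq_nil in Hnil as [-> _]; contradiction.
  - destruct q as [|x q].
    + rewrite app_nil_r in Hcq. exists (src e). simpl; auto.
    + destruct (IH (src e) ltac:(discriminate) Hcq) as [u [Hu Huq]].
      exists u. split; [exact Hu|].
      apply path_from_to_snoc. auto.
Qed.

Lemma closed_path_prefix {w v : vert F} {c q : list (edge F)} :
  c <> [] -> path_from_to w v (c ++ q) -> path_from_to w v q -> closed_path c.
Proof.
  intros Hc Hcq Hq.
  assert (Hq0 : q <> []) by (destruct q; [contradiction | discriminate]).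
  destruct (path_from_to_app_inv Hc Hq0 Hcq) as [u [Hwu Huq]].
  exists w. rewrite (path_from_to_src_uniq Huq Hq) in Hwu. exact Hwu.
Qed.

Hypothesis rng_inj : forall f f' : edge F, rng f = rng f' -> f = f'.

Lemma path_from_to_suffix {w w' v : vert F} {p q : list (edge F)} :
  path_from_to w v p -> path_from_to w' v q ->
  exists c, p = c ++ q \/ q = c ++ p.
Proof.
  revert v q.
  induction p as [|e p IH] using rev_ind; intros v q Hp Hq; [contradiction|].
  destruct q as [|e' q _] using rev_ind; [contradiction|].
  apply path_from_to_snoc in Hp as [He [[-> _] | Hp]];
  apply path_from_to_snoc in Hq as [He' [[-> _] | Hq]];
  assert (e' = e) as -> by (apply rng_inj; congruence).
  - exists []; left; reflexivity.
  - exists q; right; reflexivity.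
  - exists p; left; reflexivity.
  - destruct (IH _ _ Hp Hq) as [c [-> | ->]];
      exists c; rewrite <- app_assoc; auto.
Qed.

End Paths.

Theorem lemma5p15 (E : graph) (sp : vert E -> option (edge E))
  (HE : row_finite E) (Hsp : special_choice sp)
  (F : graph) (phi : hom F (double E)) (HF : ext_rep_graph sp phi)
  (w v : vert F) (p q : list (edge F)) :
  path_from_to w v p -> path_from_to w v q ->
  p = q \/ exists c, closed_path c /\ (c ++ p = q \/ p = c ++ q).
Proof.
  intros Hp Hq.
  pose proof (ext_rep_graph_rng_inj HF) as rng_inj.
  destruct (path_from_to_suffix rng_inj Hp Hq) as [[|a c] [Hpc | Hqc]].
  - left; exact Hpc.
  - left; symmetry; exact Hqc.
  - right; exists (a :: c); split; [|right; exact Hpc].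
    rewrite Hpc in Hp. refine (closed_path_prefix _ Hp Hq); discriminate.
  - right; exists (a :: c); split; [|left; symmetry; exact Hqc].
    rewrite Hqc in Hq. refine (closed_path_prefix _ Hq Hp); discriminate.
Qed.
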